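(* Let $G$ be a Garside group with Garside element $\Delta$, and let $H$ be an abelian subgroup of $G$ all of whose elements are periodic. Then the restriction $\mathrm{INF}|_H: H\to\mathbb Q$ is an injective group homomorphism. In particular, $H$ is cyclic.
   Context: $G$ is a Garside group: the group of fractions of a Garside monoid $G^+$ (an atomic, left and right cancellative monoid that is a lattice under both the prefix order and the suffix order, with a Garside element $\Delta$ whose left and right divisors coincide, form a finite set, and generate $G^+$); some positive power of $\Delta$ is central. For $g,h\in G$, $g\le_L h$ means $g^{-1}h\in G^+$; $\inf(g)=\max\{r\in\mathbb Z:\Delta^r\le_L g\}$ and $\mathrm{INF}(g)=\lim_{n\to\infty}\inf(g^n)/n$ (this limit exists and is rational). An element $g$ is periodic if $g=1$ or $g^k$ is conjugate to $\Delta^\ell$ for some nonzero integers $k,\ell$. *)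

From HB Require Import structures.
From mathcomp Require Import all_boot all_order all_algebra.
From Stdlib Require Import ClassicalEpsilon.
Set Implicit Arguments. Unset Strict Implicit. Unset Printing Implicit Defensive.
Import Order.TTheory GRing.Theory Num.Theory.

Record Group := {
  gcar :> Type;
  gmul : gcar -> gcar -> gcar;
  gone : gcar;
  ginv : gcar -> gcar;
  gmulA : forall x y z, gmul x (gmul y z) = gmul (gmul x y) z;
  gmul1l : forall x, gmul gone x = x;
  gmul1r : forall x, gmul x gone = x;
  gmulVl : forall x, gmul (ginv x) x = gone;
  gmulVr : forall x, gmul x (ginv x) = gone
}.

Section GroupDefs.
Variable G : Group.
Local Notation "x * y" := (gmul x y).
Local Notation "1" := (gone G).

Definition gprod (s : seq G) : G := foldr (@gmul G) 1 s.

Definition gpown (g : G) (n : nat) : G := iter n (gmul g) 1.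
Definition gpow (g : G) (k : int) : G :=
  match k with
  | Posz n => gpown g n
  | Negz n => ginv (gpown g n.+1)
  end.

Definition prefix (P : G -> Prop) (a b : G) := exists c, P c /\ b = a * c.
Definition suffix (P : G -> Prop) (a b : G) := exists c, P c /\ b = c * a.

Definition is_lattice (P : G -> Prop) (le : G -> G -> Prop) :=
  forall a b, P a -> P b ->
    (exists m, [/\ P m, le m a, le m b &
                forall c, P c -> le c a -> le c b -> le c m]) /\
    (exists j, [/\ P j, le a j, le b j &
                forall c, P c -> le a c -> le b c -> le j c]).

Definition atomic (P : G -> Prop) :=
  forall a, P a -> exists N : nat, forall s : seq G,
    (forall x, List.In x s -> P x /\ x <> 1) -> gprod s = a -> (size s <= N)%N.

End GroupDefs.

(* ---------- Garside groups ----------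
   A Garside group is given as a group G together with a submonoid Pos
   (the Garside monoid G^+, embedded in G) such that G is the group of
   fractions of Pos (every element is a b^-1 with a, b in Pos), Pos is
   atomic, a lattice for both prefix and suffix orders (cancellativity is
   automatic inside a group), and Delta is a Garside element. *)
Record GarsideGroup := {
  ggrp :> Group;
  Pos : ggrp -> Prop;
  Delta : ggrp;
  Pos1 : Pos (gone ggrp);
  PosM : forall a b, Pos a -> Pos b -> Pos (gmul a b);
  Pos_fractions : forall g, exists a b, [/\ Pos a, Pos b & g = gmul a (ginv b)];
  Pos_atomic : atomic Pos;
  Pos_prefix_lattice : is_lattice Pos (prefix Pos);
  Pos_suffix_lattice : is_lattice Pos (suffix Pos);
  PosDelta : Pos Delta;
  Delta_divisors : forall a, Pos a -> (prefix Pos a Delta <-> suffix Pos a Delta);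
  Delta_finite : exists s : seq ggrp,
      forall a, Pos a -> prefix Pos a Delta -> List.In a s;
  Delta_generates : forall a, Pos a -> exists s : seq ggrp,
      (forall x, List.In x s -> Pos x /\ prefix Pos x Delta) /\ gprod s = a
}.

Section GarsideDefs.
Variable G : GarsideGroup.

Definition leL (g h : G) := @Pos G (gmul (ginv g) h).

Definition is_inf (g : G) (r : int) :=
  leL (gpow (@Delta G) r) g /\ forall s : int, leL (gpow (@Delta G) s) g -> (s <= r)%R.

Definition infG (g : G) : int := epsilon (inhabits 0%R) (is_inf g).

Definition INF_limit (g : G) (q : rat) :=
  forall eps : rat, (0 < eps)%R -> exists N : nat, forall n : nat, (N <= n)%N -> (0 < n)%N ->
    (`| (infG (gpown g n))%:~R / n%:R - q | < eps)%R.

Definition INF (g : G) : rat := epsilon (inhabits 0%R) (INF_limit g).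

Definition periodic (g : G) :=
  g = gone G \/
  exists (k l : int) (x : G), [/\ k <> 0%R, l <> 0%R &
      gpow g k = gmul (ginv x) (gmul (gpow (@Delta G) l) x)].

End GarsideDefs.

From Pilot Require Import Defs.
From HB Require Import structures.
From mathcomp Require Import all_boot all_order all_algebra zify.
From Stdlib Require Import ClassicalEpsilon.
Import Order.TTheory GRing.Theory Num.Theory.
Set Implicit Arguments. Unset Strict Implicit. Unset Printing Implicit Defensive.

(* Conjugation by Δ permutes the finite set of simple
      elements, so some power D = Δ^N (N > 0) fixes every simple element; as
      the simple elements generate G^+ and G is its group of fractions, D is
      central.
      If x^K = D^T with K > 0, then inf(x^n) - nNT/K is bounded, so
      INF(x) = NT/K.  A periodic x has such a power, with T <> 0 when x <> 1.
   3. Bounded denominators.  If x^K = D^L, conjugating x by the meet of the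
      elements D^(-floor(jL/K)) x^j yields y whose normalised powers lie in the
      finite interval [1, D]; by pigeonhole x^e is a power of D for some e
      bounded by the number Q of positive divisors of D.  Hence INF(x) Q! is an
      integer.
   4. On H, INF is an additive map (powers of the factors commute), injective
      (INF(x) = 0 forces T = 0), with values in (1/Q!)Z; a subgroup with an
      injective homomorphism into Z is cyclic. *)

Section GroupFacts.
Variable G : Defs.Group.
Local Notation "x ⋅ y" := (@gmul G x y) (at level 40, left associativity).
Local Notation one := (gone G).
Local Notation inv := (@ginv G).

Lemma gmulKl (x y : G) : inv x ⋅ (x ⋅ y) = y.
Proof. by rewrite gmulA gmulVl gmul1l. Qed.

Lemma gmulKVl (x y : G) : x ⋅ (inv x ⋅ y) = y.
Proof. by rewrite gmulA gmulVr gmul1l. Qed.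

Lemma gmulKr (x y : G) : y ⋅ x ⋅ inv x = y.
Proof. by rewrite -gmulA gmulVr gmul1r. Qed.

Lemma gmulKVr (x y : G) : y ⋅ inv x ⋅ x = y.
Proof. by rewrite -gmulA gmulVl gmul1r. Qed.

Lemma gmulIl (x y z : G) : x ⋅ y = x ⋅ z -> y = z.
Proof. by move=> e; rewrite -(gmulKl x y) e gmulKl. Qed.

Lemma gmulIr (x y z : G) : y ⋅ x = z ⋅ x -> y = z.
Proof. by move=> e; rewrite -(gmulKr x y) e gmulKr. Qed.

Lemma ginv_uniq (x y : G) : x ⋅ y = one -> y = inv x.
Proof. by move=> e; apply: (@gmulIl x); rewrite e gmulVr. Qed.

Lemma ginvK (x : G) : inv (inv x) = x.
Proof. by symmetry; apply: ginv_uniq; rewrite gmulVl. Qed.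

Lemma ginv1 : inv one = one.
Proof. by symmetry; apply: ginv_uniq; rewrite gmul1l. Qed.

Lemma ginvM (x y : G) : inv (x ⋅ y) = inv y ⋅ inv x.
Proof. by symmetry; apply: ginv_uniq; rewrite -gmulA gmulKVl gmulVr. Qed.

Definition gcommute (x y : G) := x ⋅ y = y ⋅ x.

Lemma gcommute1 x : gcommute x one.
Proof. by rewrite /gcommute gmul1r gmul1l. Qed.

Lemma gcommuteM x y z : gcommute x y -> gcommute x z -> gcommute x (y ⋅ z).
Proof. by rewrite /gcommute => exy exz; rewrite gmulA exy -gmulA exz gmulA. Qed.

Lemma gcommuteV x y : gcommute x y -> gcommute x (inv y).
Proof.
rewrite /gcommute => e; apply: (@gmulIl y).
by rewrite gmulA -e -gmulA gmulVr gmulKVl gmul1r.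
Qed.

Lemma gpownS (g : G) n : gpown g n.+1 = g ⋅ gpown g n. Proof. by []. Qed.

Lemma gpown1 (g : G) : gpown g 1 = g. Proof. by rewrite gpownS gmul1r. Qed.

Lemma gpownD (g : G) m n : gpown g (m + n) = gpown g m ⋅ gpown g n.
Proof.
by elim: m => [|m IH]; rewrite ?gmul1l // addSn !gpownS IH gmulA.
Qed.

Lemma gpownM (g : G) m n : gpown g (m * n) = gpown (gpown g m) n.
Proof. by elim: n => [|n IH]; rewrite ?muln0 // mulnS gpownD IH. Qed.

Lemma gcommute_pown x y n : gcommute x y -> gcommute x (gpown y n).
Proof.
by move=> e; elim: n => [|n IH]; [exact: gcommute1 | exact: gcommuteM].
Qed.

Lemma gpownMc (x y : G) n : gcommute x y -> gpown (x ⋅ y) n = gpown x n ⋅ gpown y n.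
Proof.
move=> e; elim: n => [|n IH]; first by rewrite gmul1l.
have eyx : gcommute y (gpown x n) by apply: gcommute_pown.
by rewrite !gpownS IH -!gmulA (gmulA y) eyx -!gmulA.
Qed.

Lemma gpown_conj (w y : G) n : gpown (inv w ⋅ y ⋅ w) n = inv w ⋅ gpown y n ⋅ w.
Proof.
elim: n => [|n IH]; first by rewrite gmul1r gmulVl.
by rewrite !gpownS IH -!gmulA gmulKVl !gmulA.
Qed.

Lemma gpowE (g : G) (m n : nat) :
  gpow g (m%:Z - n%:Z)%R = gpown g m ⋅ inv (gpown g n).
Proof.
case: (leqP n m) => lenm.
  by rewrite subzn //= -{2}(subnK lenm) gpownD gmulKr.
have -> : (m%:Z - n%:Z = - (n - m)%N%:Z)%R by rewrite -subzn ?opprB // ltnW.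
case E: (n - m)%N => [|k]; first by move: lenm; rewrite -subn_gt0 E.
rewrite -NegzE; change (inv (gpown g k.+1) = gpown g m ⋅ inv (gpown g n)).
by rewrite -E -{2}(subnK (ltnW lenm)) gpownD ginvM gmulKVl.
Qed.

Lemma gpowD (g : G) (a b : int) : gpow g (a + b)%R = gpow g a ⋅ gpow g b.
Proof.
have int_diff (c : int) : exists m n : nat, c = (m%:Z - n%:Z)%R.
  by case: c => [m|k]; [exists m, 0%N; rewrite subr0 | exists 0%N, k.+1; rewrite NegzE sub0r].
have [m1 [n1 ->]] := int_diff a; have [m2 [n2 ->]] := int_diff b.
have -> : (m1%:Z - n1%:Z + (m2%:Z - n2%:Z) = (m1 + m2)%N%:Z - (n1 + n2)%N%:Z)%R.
  by rewrite !PoszD opprD addrACA.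
have powC i j : gcommute (gpown g i) (gpown g j) by rewrite /gcommute -!gpownD addnC.
have c1 : gcommute (gpown g m2) (inv (gpown g n1)) by apply: gcommuteV.
have c2 : gcommute (inv (gpown g n2)) (inv (gpown g n1)).
  by apply: gcommuteV; apply/esym/gcommuteV.
rewrite !gpowE !gpownD ginvM -!gmulA; congr (_ ⋅ _).
by rewrite c2 !gmulA c1.
Qed.

Lemma gpowN (g : G) (a : int) : gpow g (- a)%R = inv (gpow g a).
Proof. by apply: ginv_uniq; rewrite -gpowD subrr. Qed.

Lemma gpowMn (g : G) (a : int) (n : nat) : gpow g (a * n%:Z)%R = gpown (gpow g a) n.
Proof.
elim: n => [|n IH]; first by rewrite mulr0.
by rewrite -addn1 PoszD mulrDr gpowD IH mulr1 gpownD gpown1.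
Qed.

Lemma gpowM (g : G) (a b : int) : gpow g (a * b)%R = gpow (gpow g a) b.
Proof.
case: b => [n|k]; first exact: gpowMn.
by rewrite NegzE mulrN !gpowN gpowMn.
Qed.

Lemma gcommute_pow x y a : gcommute x y -> gcommute x (gpow y a).
Proof.
case: a => [n|n] e; first exact: gcommute_pown.
exact: (gcommuteV (gcommute_pown n.+1 e)).
Qed.

Lemma gprod_cat (s t : seq G) : gprod s ⋅ gprod t = gprod (s ++ t).
Proof. by elim: s => [|x s IH] /=; rewrite ?gmul1l // -IH gmulA. Qed.

Lemma gprod_nseq n (x : G) : gprod (nseq n x) = gpown x n.
Proof. by elim: n => //= n ->. Qed.

End GroupFacts.

Lemma pigeonhole (T : Type) (L : list T) (f : nat -> T) :
  (forall j, (j <= size L)%N -> List.In (f j) L) ->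
  exists i j, [/\ (i < j)%N, (j <= size L)%N & f i = f j].
Proof.
move=> f_in.
pose idx j k := (k < size L)%N /\ List.nth k L (f 0%N) = f j.
have idx_ex j : (j <= size L)%N -> exists k, idx j k.
  move=> hj; have [k [hk e]] := List.In_nth L (f j) (f 0%N) (f_in j hj).
  by exists k; split=> //; apply/ssrnat.ltP.
pose g j := epsilon (inhabits 0%N) (idx j).
have gP j : (j <= size L)%N -> idx j (g j) by move=> hj; apply: epsilon_spec; exact: idx_ex.
have not_uniq : ~~ uniq (map g (iota 0 (size L).+1)).
  apply/negP => u.
  have sub : {subset map g (iota 0 (size L).+1) <= iota 0 (size L)}.
    move=> x /mapP [j]; rewrite mem_iota add0n => /andP [_ hj] ->.
    by rewrite mem_iota add0n; case: (gP j hj).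
  by have := uniq_leq_size u sub; rewrite size_map !size_iota ltnn.
have [i [j [lt_ij hj e]]] := uniqPn 0%N not_uniq.
move: hj; rewrite size_map size_iota => hj.
rewrite !(nth_map 0%N) ?size_iota ?(ltn_trans lt_ij) // !nth_iota ?(ltn_trans lt_ij) //
  !add0n in e.
exists i, j; split=> //.
have [_ ei] := gP i (ltnW (leq_ltn_trans lt_ij hj)).
have [_ ej] := gP j hj.
by rewrite -ei -ej e.
Qed.

Section GarsideBasics.
Variable G : GarsideGroup.
Local Notation "x ⋅ y" := (@gmul G x y) (at level 40, left associativity).
Local Notation one := (gone G).
Local Notation inv := (@ginv G).
Local Notation P := (@Pos G).
Local Notation Δ := (Delta G).

Lemma leL_refl (a : G) : leL a a.
Proof. by rewrite /leL gmulVl; exact: Pos1. Qed.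

Lemma leL_trans (a b c : G) : leL a b -> leL b c -> leL a c.
Proof. by rewrite /leL => lab lbc; have := PosM lab lbc; rewrite -gmulA gmulKVl. Qed.

Lemma leL_mull (g a b : G) : leL (g ⋅ a) (g ⋅ b) <-> leL a b.
Proof. by rewrite /leL ginvM -gmulA gmulKl. Qed.

Lemma leL1 (a : G) : leL one a <-> P a.
Proof. by rewrite /leL ginv1 gmul1l. Qed.

Lemma prefix_leL (a b : G) : Defs.prefix P a b <-> leL a b.
Proof.
split; first by case=> c [Pc ->]; rewrite /leL gmulKl.
by move=> lab; exists (inv a ⋅ b); split=> //; rewrite gmulKVl.
Qed.

Lemma Pos_gpown (g : G) n : P g -> P (gpown g n).
Proof. by move=> Pg; elim: n => [|n IH]; [exact: Pos1 | exact: PosM]. Qed.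

(* G^+ has no nontrivial units: by atomicity, 1 = a a^-1 a a^-1 ... would
   otherwise have arbitrarily long decompositions. *)
Lemma Pos_unit (a : G) : P a -> P (inv a) -> a = one.
Proof.
move=> Pa Pia; apply: NNPP => a_neq1.
have [B HB] := Pos_atomic (Pos1 G).
pose s := flatten (nseq B.+1 [:: a; inv a]).
have prod_s : gprod s = one by rewrite /s; elim: B.+1 => //= n ->; rewrite gmul1r gmulVr.
have size_s : (B < size s)%N.
  by rewrite /s size_flatten /shape map_nseq /= sumn_nseq; lia.
have atoms_s x : List.In x s -> P x /\ x <> one.
  rewrite /s; elim: B.+1 => [|n IH] //= [<-|[<-|/IH //]]; split=> // ia1.
  by apply: a_neq1; rewrite -(ginvK a) ia1 ginv1.
by have := HB s atoms_s prod_s; rewrite leqNgt size_s.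
Qed.

Definition simple (a : G) := P a /\ Defs.prefix P a Δ.

Lemma Pos_simple_ind (Q : G -> Prop) :
  Q one -> (forall s a, simple s -> Q a -> Q (s ⋅ a)) -> forall a, P a -> Q a.
Proof.
move=> Q1 QM a Pa; have [l [l_simple <-]] := Delta_generates Pa.
elim: l l_simple => [|x l IH] l_simple //=.
apply: QM; first exact: l_simple x (or_introl erefl).
by apply: IH => y ly; apply: l_simple; right.
Qed.

Definition cj n (x : G) := inv (gpown Δ n) ⋅ x ⋅ gpown Δ n.

(* Conjugation by Δ maps simple elements to simple elements: if a c = Δ then
   c is a suffix, hence a prefix, of Δ, and Δ^-1 a Δ is the complementary
   suffix. *)
Lemma conj_Delta_simple a : simple a -> simple (cj 1 a).
Proof.
case=> Pa [c [Pc Delta_ac]].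
have [_ /(_ (ex_intro _ a (conj Pa Delta_ac))) [e [Pe Delta_ce]]] :=
  Delta_divisors Pc.
have -> : cj 1 a = e.
  have a_Delta : a ⋅ Δ = Δ ⋅ e by rewrite {1}Delta_ce gmulA -Delta_ac.
  by rewrite /cj gpown1 -gmulA a_Delta gmulKl.
by split=> //; apply/(Delta_divisors Pe); exists c.
Qed.

Lemma cjD m n x : cj (m + n) x = cj n (cj m x).
Proof. by rewrite /cj gpownD ginvM !gmulA. Qed.

Lemma cj_simple n x : simple x -> simple (cj n x).
Proof.
elim: n x => [|n IH] x sx; first by rewrite /cj ginv1 gmul1l gmul1r.
by rewrite -addn1 cjD; apply: conj_Delta_simple; apply: IH.
Qed.

Lemma cj_inj n x y : cj n x = cj n y -> x = y.
Proof. by rewrite /cj => /gmulIr /gmulIl. Qed.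

(* Conjugation by Δ permutes the simple elements, which are listed in S; so
   each simple element has a period at most size S. *)
Lemma simple_conj_period (S : seq G) s :
  (forall a, simple a -> List.In a S) -> simple s ->
  exists2 p, (0 < p <= size S)%N & cj p s = s.
Proof.
move=> S_simple ss.
have [i [j [lt_ij le_jS e]]] :=
  @pigeonhole _ S (fun j => cj j s) (fun j _ => S_simple _ (cj_simple j ss)).
exists (j - i)%N; first by rewrite subn_gt0 lt_ij (leq_trans (leq_subr _ _)).
by apply: (@cj_inj i); rewrite -cjD subnK ?e // ltnW.
Qed.

(* An element commuting with every simple element is central, since the
   simple elements generate G^+ and G is the group of fractions of G^+. *)
Lemma central_of_commute_simples z :
  (forall s, simple s -> gcommute z s) -> forall g, gcommute z g.
Proof.
move=> z_simple g.
have z_pos : forall a, P a -> gcommute z a.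
  apply: Pos_simple_ind; first exact: gcommute1.
  by move=> s a ss za; exact: gcommuteM (z_simple s ss) za.
have [a [b [Pa Pb ->]]] := Pos_fractions g.
by apply: gcommuteM; [exact: z_pos | apply: gcommuteV; exact: z_pos].
Qed.

Lemma Delta_power_central :
  exists2 N, (0 < N)%N & forall g, gcommute (gpown Δ N) g.
Proof.
have [S S_simple] := Delta_finite G.
have simple_S a : simple a -> List.In a S by case=> Pa /S_simple; exact.
exists (size S)`!; first exact: fact_gt0.
apply: central_of_commute_simples => s ss.
have [p /andP [p_gt0 p_le] cj_p] := simple_conj_period simple_S ss.
have [c ->] : exists c, (size S)`! = (p * c)%N.
  have /dvdnP [c ->] := dvdn_fact (n := size S) (m := p) (introT andP (conj p_gt0 p_le)).
  by exists c; rewrite mulnC.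
have cj_pc : cj (p * c) s = s.
  elim: c => [|c IH]; last by rewrite mulnS cjD cj_p IH.
  by rewrite muln0 /cj ginv1 gmul1l gmul1r.
by rewrite /gcommute -{1}cj_pc /cj gmulA gmulKVl.
Qed.

(* In a nontrivial Garside group Δ <> 1: otherwise every simple element
   would be a unit of G^+, hence trivial, and so would be G^+ and G. *)
Lemma Delta_neq1 : (exists g : G, g <> one) -> Δ <> one.
Proof.
move=> [g g_neq1] Delta1; apply: g_neq1.
have Pos_triv : forall a, P a -> a = one.
  apply: Pos_simple_ind => // s a [Ps [c [Pc sc]]] ->.
  rewrite Delta1 in sc; rewrite (Pos_unit Ps) ?gmul1l // -(ginv_uniq (esym sc)).
  exact: Pc.
have [a [b [Pa Pb ->]]] := Pos_fractions g.
by rewrite (Pos_triv a Pa) (Pos_triv b Pb) ginv1 gmul1l.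
Qed.

Lemma simple_factorisation a : P a ->
  exists l, gprod l = a /\ forall x, List.In x l -> simple x /\ x <> one.
Proof.
move: a; apply: Pos_simple_ind; first by exists [::].
move=> s _ ss [l [<- l_simple]].
case: (classic (s = one)) => [->|s_neq1]; first by exists l; rewrite gmul1l.
by exists (s :: l); split=> // x [<-|/l_simple].
Qed.

Fixpoint words (S : seq G) (n : nat) : seq (seq G) :=
  if n is n'.+1 then [::] :: List.flat_map (fun x => map (cons x) (words S n')) S
  else [:: [::]].

Lemma words_in (S : seq G) n (l : seq G) :
  (size l <= n)%N -> (forall x, List.In x l -> List.In x S) -> List.In l (words S n).
Proof.
elim: n l => [|n IH] [|x l] //=; try by left.
move=> size_l l_S; right; apply/List.in_flat_map; exists x; split; first by apply: l_S; left.
by apply: List.in_map; apply: IH => // y ly; apply: l_S; right.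
Qed.

(* The interval [1, p] of a positive element is finite: its elements are
   products of the words over the simple elements whose length is bounded by
   the atomicity bound of p. *)
Lemma Pos_interval_finite p : P p ->
  exists divs : seq G, forall a, P a -> leL a p -> List.In a divs.
Proof.
move=> Pp; have [S S_simple] := Delta_finite G; have [B HB] := Pos_atomic Pp.
exists (map (@gprod G) (words S B)) => a Pa lap.
have [la [prod_la la_simple]] := simple_factorisation Pa.
have [lc [prod_lc lc_simple]] := simple_factorisation lap.
rewrite -prod_la; apply: List.in_map; apply: words_in; last first.
  by move=> x /la_simple [[Px x_Delta] _]; apply: S_simple.
apply: leq_trans (HB (la ++ lc) _ _); first by rewrite size_cat leq_addr.
  by move=> x /List.in_app_iff [/la_simple|/lc_simple] [[Px _] x_neq1].
by rewrite -gprod_cat prod_lc prod_la gmulKVl.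
Qed.

End GarsideBasics.

Local Open Scope ring_scope.

Lemma int_max_exists (S : int -> Prop) (r0 R : int) :
  S r0 -> (forall s, S s -> s <= R) -> exists2 r, S r & forall s, S s -> s <= r.
Proof.
move=> Sr0 bound.
have step r : (forall s, S s -> s <= r) \/ exists2 s, S s & r < s.
  case: (classic (forall s, S s -> s <= r)) => [|/not_all_ex_not [s]]; first by left.
  move=> h; have [Ss not_le] := imply_to_and _ _ h.
  by right; exists s => //; rewrite ltNge; exact/negP.
suff ind : forall (k : nat) r, S r -> R - r <= k%:Z ->
    exists2 r, S r & forall s, S s -> s <= r.
  by apply: (ind `|R - r0|%N r0 Sr0); rewrite abszE ler_norm.
elim=> [|k IH] r Sr hr; case: (step r) => [rmax|[s Ss lt_rs]]; try by exists r.
  by have := bound s Ss; lia.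
by apply: (IH s Ss); lia.
Qed.

Lemma divz_add_bounds (a b K : int) : 0 < K ->
  (a %/ K)%Z + (b %/ K)%Z <= ((a + b) %/ K)%Z <= (a %/ K)%Z + (b %/ K)%Z + 1.
Proof.
move=> K_gt0; have K_neq0 : K != 0 by rewrite gt_eqF.
have -> : a + b = ((a %/ K)%Z + (b %/ K)%Z) * K + ((a %% K)%Z + (b %% K)%Z).
  by rewrite {1}(divz_eq a K) {1}(divz_eq b K) mulrDl addrACA.
rewrite divzMDl //.
have := modz_ge0 a K_neq0; have := modz_ge0 b K_neq0.
have := ltz_pmod a K_gt0; have := ltz_pmod b K_gt0.
set ra := (a %% K)%Z; set rb := (b %% K)%Z => rb_lt ra_lt rb_ge0 ra_ge0.
have carry_ge0 : 0 <= ((ra + rb) %/ K)%Z by rewrite divz_ge0 // addr_ge0.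
have carry_le1 : ((ra + rb) %/ K)%Z <= 1.
  case: (ltrP (ra + rb) K) => hr.
    by rewrite divz_small // addr_ge0 //= gtz0_abs.
  have -> : ra + rb = 1 * K + (ra + rb - K) by rewrite mul1r [RHS]addrC subrK.
  rewrite divzMDl // divz_small ?addr0 // subr_ge0 hr /= gtz0_abs //.
  by rewrite ltrBlDr ltrD.
by rewrite lerDl carry_ge0 /= lerD2l.
Qed.

Definition rat_lim (a : nat -> rat) (q : rat) :=
  forall eps : rat, 0 < eps -> exists N : nat, forall n : nat, (N <= n)%N -> (0 < n)%N ->
    `|a n - q| < eps.

Lemma rat_lim_uniq a q q' : rat_lim a q -> rat_lim a q' -> q = q'.
Proof.
move=> lim_q lim_q'; apply/eqP; rewrite -subr_eq0; apply/negPn/negP => nz.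
have eps_gt0 : 0 < `|q - q'| / 2 by rewrite divr_gt0 // normr_gt0.
have [N1 H1] := lim_q _ eps_gt0; have [N2 H2] := lim_q' _ eps_gt0.
set n := (maxn N1 N2).+1.
have h1 := H1 n (leq_trans (leq_maxl _ _) (leqnSn _)) isT.
have h2 := H2 n (leq_trans (leq_maxr _ _) (leqnSn _)) isT.
have tri : `|q - q'| <= `|a n - q| + `|a n - q'|.
  have -> : q - q' = (a n - q') - (a n - q) by rewrite opprB [RHS]addrC addrA subrK.
  by apply: le_trans (ler_normB _ _) _; rewrite addrC.
have := le_lt_trans tri (ltrD h1 h2); by rewrite -splitr ltxx.
Qed.

Lemma rat_lim_bounded (a : nat -> rat) (q C : rat) :
  (forall n, (0 < n)%N -> `|a n * n%:R - n%:R * q| <= C) -> rat_lim a q.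
Proof.
move=> bnd e e_gt0.
have C_ge0 : 0 <= C by apply: le_trans (bnd 1%N isT); exact: normr_ge0.
exists (Num.Def.archi_bound (C / e)) => n hn n_gt0.
have n_pos : 0 < n%:R :> rat by rewrite ltr0n.
have hC : C / e < n%:R.
  apply: lt_le_trans (archi_boundP (divr_ge0 C_ge0 (ltW e_gt0))) _.
  by rewrite ler_nat.
have -> : `|a n - q| = `|a n * n%:R - n%:R * q| / n%:R.
  by rewrite [_ * q]mulrC -mulrBl normrM (ger0_norm (ltW n_pos)) mulfK ?gt_eqF.
rewrite ltr_pdivrMr //; apply: le_lt_trans (bnd n n_gt0) _.
by rewrite mulrC -ltr_pdivrMr.
Qed.

Section IntegralHomomorphism.
Variable G : Defs.Group.
Local Notation "x ⋅ y" := (@gmul G x y) (at level 40, left associativity).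
Local Notation one := (gone G).
Local Notation inv := (@ginv G).

Variable H : G -> Prop.
Hypotheses (H1 : H one) (HM : forall x y, H x -> H y -> H (x ⋅ y))
  (HV : forall x, H x -> H (inv x)).
Variable phi : G -> rat.
Hypothesis phiM : forall x y, H x -> H y -> phi (x ⋅ y) = phi x + phi y.
Hypothesis phi_inj : forall x y, H x -> H y -> phi x = phi y -> x = y.
Hypothesis phi_int : forall x, H x -> exists z : int, phi x = z%:~R.

Lemma H_gpow c k : H c -> H (gpow c k).
Proof.
move=> Hc; have Hn n : H (gpown c n) by elim: n => // n IH; exact: HM.
by case: k => n; last apply: HV; exact: Hn.
Qed.

Lemma hom1 : phi one = 0.
Proof. by apply: (addrI (phi one)); rewrite -phiM // gmul1l addr0. Qed.

Lemma homV x : H x -> phi (inv x) = - phi x.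
Proof. by move=> Hx; apply/eqP; rewrite -addr_eq0 -phiM ?gmulVl ?hom1 //; exact: HV. Qed.

Lemma hom_gpow c k : H c -> phi (gpow c k) = k%:~R * phi c.
Proof.
move=> Hc; have Hn n : H (gpown c n) := H_gpow n%:Z Hc.
have phi_n n : phi (gpown c n) = n%:R * phi c.
  elim: n => [|n IH]; first by rewrite hom1 mul0r.
  by rewrite gpownS phiM // IH mulrS mulrDl mul1r.
case: k => n; first exact: phi_n.
by rewrite homV // phi_n NegzE mulNr.
Qed.

Lemma least_positive_value : (exists x, H x /\ x <> one) ->
  exists n0 c, [/\ (0 < n0)%N, H c, phi c = n0%:R &
    forall x (n : nat), H x -> phi x = n%:R -> (0 < n)%N -> (n0 <= n)%N].
Proof.
move=> [x0 [Hx0 x0_neq1]].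
pose value n := (0 < n)%N /\ exists c, H c /\ phi c = n%:R.
pose valueb n := if excluded_middle_informative (value n) then true else false.
have valuebP n : valueb n <-> value n by rewrite /valueb; case: excluded_middle_informative.
have valueb_ex : exists n, valueb n.
  have [z ez] := phi_int Hx0.
  have z_neq0 : z != 0.
    by apply/eqP => z0; apply: x0_neq1; apply: phi_inj; rewrite // hom1 ez z0.
  exists `|z|%N; apply/valuebP; split; first by rewrite absz_gt0.
  case: (ltrP 0 z) => z_sign.
    by exists x0; rewrite ez -[in LHS](gez0_abs (ltW z_sign)).
  exists (inv x0); split; first exact: HV.
  by rewrite homV // ez -intrN -(lez0_abs z_sign).
have [n0 /valuebP [n0_gt0 [c [Hc ec]]] n0_min] := ex_minnP valueb_ex.
exists n0, c; split=> // x n Hx ex n_gt0.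
by apply: n0_min; apply/valuebP; split=> //; exists x.
Qed.

(* Euclidean division by the least positive value: x c^-k has value in
   [0, phi c), hence value 0, hence is trivial. *)
Lemma cyclic_of_integral_hom :
  exists c, H c /\ forall x, H x -> exists k : int, x = gpow c k.
Proof.
case: (classic (exists x, H x /\ x <> one)) => [nontrivial|trivial]; last first.
  exists one; split=> // x Hx; exists 0.
  by apply: NNPP => x_neq1; apply: trivial; exists x.
have [n0 [c [n0_gt0 Hc ec n0_min]]] := least_positive_value nontrivial.
exists c; split=> // x Hx; have [zx ezx] := phi_int Hx.
set k := (zx %/ n0%:Z)%Z; exists k.
set y := x ⋅ inv (gpow c k).
have Hck : H (gpow c k) by apply: H_gpow.
have Hy : H y by apply: HM => //; exact: HV.
have ey : phi y = ((zx %% n0%:Z)%Z)%:~R.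
  rewrite /y phiM ?homV ?hom_gpow //; last exact: HV.
  by rewrite ezx ec {1}(divz_eq zx n0%:Z) intrD intrM addrAC subrr add0r.
have rem0 : (zx %% n0%:Z)%Z = 0.
  have n0_neq0 : n0%:Z != 0 by rewrite eqz_nat -lt0n.
  have [r er] : exists r : nat, (zx %% n0%:Z)%Z = r%:Z.
    by exists `|(zx %% n0%:Z)%Z|%N; rewrite gez0_abs // modz_ge0.
  have r_lt : (r < n0)%N by rewrite -ltz_nat -er ltz_pmod // ltz_nat.
  rewrite er; case: r er r_lt => // r er r_lt.
  by have := n0_min y r.+1 Hy; rewrite ey er => /(_ erefl isT); rewrite leqNgt r_lt.
have y1 : y = one by apply: phi_inj => //; rewrite hom1 ey rem0.
by rewrite -(gmulKVr (gpow c k) x) -/y y1 gmul1l.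
Qed.

End IntegralHomomorphism.

Lemma INF_of_lim (G : GarsideGroup) (x : G) q :
  rat_lim (fun n => (infG (gpown x n))%:~R / n%:R) q -> INF x = q.
Proof.
move=> lim_q; have lim_INF : INF_limit x (INF x).
  by rewrite /INF; apply: epsilon_spec; exists q; exact: lim_q.
exact: rat_lim_uniq lim_INF lim_q.
Qed.

Lemma INF_bounded (G : GarsideGroup) (x : G) (q C : rat) :
  (forall n, (0 < n)%N -> `|(infG (gpown x n))%:~R - n%:R * q| <= C) -> INF x = q.
Proof.
move=> bnd; apply: INF_of_lim; apply: (rat_lim_bounded (C := C)) => n n_gt0.
by rewrite mulfVK ?pnatr_eq0 -?lt0n //; apply: bnd.
Qed.

Section CentralPower.
Variables (G : GarsideGroup) (N : nat).
Local Notation "x ⋅ y" := (@gmul G x y) (at level 40, left associativity).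
Local Notation one := (gone G).
Local Notation inv := (@ginv G).
Local Notation P := (@Pos G).
Local Notation Δ := (Delta G).
Local Notation D := (gpown Δ N).
Hypotheses (N_gt0 : (0 < N)%N) (D_central : forall g : G, gcommute D g).

Lemma Dpow_commute a (g : G) : gpow D a ⋅ g = g ⋅ gpow D a.
Proof. by apply/esym/gcommute_pow; rewrite /gcommute D_central. Qed.

Lemma gpow_D a : gpow D a = gpow Δ (N%:Z * a).
Proof. by rewrite gpowM. Qed.

Lemma Dpow_pos (a : int) : 0 <= a -> P (gpow D a).
Proof. by move=> a_ge0; rewrite -(gez0_abs a_ge0); apply/Pos_gpown/Pos_gpown/PosDelta. Qed.

Lemma leL_Dpow (a b : int) (w : G) : a <= b -> leL (gpow D a ⋅ w) (gpow D b ⋅ w).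
Proof.
move=> le_ab; rewrite /leL ginvM -gpowN -gmulA (gmulA (gpow D (- a))) -gpowD.
by rewrite Dpow_commute gmulKl; apply: Dpow_pos; rewrite addrC subr_ge0.
Qed.

Lemma Pos_le_Dpow b : P b -> exists k c, P c /\ b ⋅ c = gpown D k.
Proof.
move: b; apply: Pos_simple_ind; first by exists 0%N, one; split; [exact: Pos1 | rewrite gmul1l].
move=> s b [Ps [c [Pc Delta_sc]]] [k [c' [Pc' bc']]].
have s_le_D : s ⋅ (c ⋅ gpown Δ N.-1) = D by rewrite gmulA -Delta_sc -gpownS prednK.
exists k.+1, (c' ⋅ (c ⋅ gpown Δ N.-1)); split.
  by apply/PosM/PosM => //; apply/Pos_gpown/PosDelta.
rewrite -gmulA (gmulA b) bc' -[gpown D k]/(gpow D k) Dpow_commute gmulA s_le_D.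
by [].
Qed.

Lemma Dpow_shift_pos (g : G) : exists k, P (gpown D k ⋅ g).
Proof.
have [a [b [Pa Pb ->]]] := Pos_fractions g.
have [k [c [Pc bc]]] := Pos_le_Dpow Pb.
exists k; have := Dpow_commute k (a ⋅ inv b); rewrite /= => ->.
rewrite -gmulA; apply: PosM => //.
by rewrite -bc gmulKl.
Qed.

Lemma periodic_power (x : G) : periodic x ->
  exists K T, [/\ (0 < K)%N, gpown x K = gpow D T & (x <> one -> T <> 0)].
Proof.
case=> [->|[k [l [w [k_neq0 l_neq0 conj_l]]]]].
  by exists 1%N, 0; rewrite gpown1.
have [n [l' [n_gt0 l'_neq0 conj_l']]] : exists (n : nat) (l' : int),
    [/\ (0 < n)%N, l' <> 0 & gpown x n = inv w ⋅ gpow Δ l' ⋅ w].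
  case: k k_neq0 conj_l => [n|n] k_neq0 conj_l.
    by exists n, l; rewrite -gmulA; split=> //; case: n k_neq0 {conj_l}.
  exists n.+1, (- l); split=> //; first by move/eqP; rewrite oppr_eq0 => /eqP.
  rewrite gpowN -(ginvK (gpown x n.+1)).
  by rewrite [inv (gpown x n.+1)]conj_l !ginvM ginvK.
exists (n * N)%N, l'; split=> //; first by rewrite muln_gt0 n_gt0.
rewrite gpownM conj_l' gpown_conj -gpowMn mulrC -gpow_D.
by rewrite -gmulA Dpow_commute gmulKl.
Qed.

Lemma Pos_meet (a b : G) : P a -> P b -> exists m, [/\ P m, leL m a, leL m b &
  forall c, P c -> leL c a -> leL c b -> leL c m].
Proof.
move=> Pa Pb; have [[m [Pm ma mb m_max]] _] := Pos_prefix_lattice Pa Pb.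
exists m; split=> //; try exact/prefix_leL.
by move=> c Pc /prefix_leL ca /prefix_leL cb; apply/prefix_leL/m_max.
Qed.

(* The meet in G^+ of two positive elements is their meet in all of G:
   translate a common lower bound c by a power of D to make it positive. *)
Lemma Pos_meet_global (a b : G) : P a -> P b -> exists m, [/\ leL m a, leL m b &
  forall c, leL c a -> leL c b -> leL c m].
Proof.
move=> Pa Pb; have [m [Pm ma mb m_max]] := Pos_meet Pa Pb.
exists m; split=> // c ca cb.
have [u Pu] := Dpow_shift_pos c.
set Du := gpown D u in Pu *.
have PDu : P Du by apply/Pos_gpown/Pos_gpown/PosDelta.
have [e [Pe ea eb e_max]] := Pos_meet (PosM PDu Pa) (PosM PDu Pb).
have Du_le (g : G) : P g -> leL Du (Du ⋅ g).
  by move=> Pg; rewrite -{1}(gmul1r Du); apply/leL_mull/leL1.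
have Du_e : leL Du e by apply: e_max => //; exact: Du_le.
have e_m : leL e (Du ⋅ m).
  rewrite -{1}(gmulKVl Du e); apply/leL_mull/m_max; first exact: Du_e.
    by apply/(leL_mull Du); rewrite gmulKVl.
  by apply/(leL_mull Du); rewrite gmulKVl.
apply/(leL_mull Du); apply: leL_trans e_m.
by apply: e_max => //; exact/leL_mull.
Qed.

Lemma meet_exists (a b : G) : exists m, [/\ leL m a, leL m b &
  forall c, leL c a -> leL c b -> leL c m].
Proof.
have [k Pa] := Dpow_shift_pos a; have [k' Pb] := Dpow_shift_pos b.
set Dt := gpown D (k' + k).
have Pt (g : G) (j j' : nat) : P (gpown D j ⋅ g) -> P (gpown D (j' + j) ⋅ g).
  by move=> Pg; rewrite gpownD -gmulA; apply: PosM Pg; apply/Pos_gpown/Pos_gpown/PosDelta.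
have Pb' : P (Dt ⋅ b) by rewrite /Dt addnC; exact: Pt.
have [m [ma mb m_max]] := Pos_meet_global (Pt a k k' Pa) Pb'.
exists (inv Dt ⋅ m); split; try by apply/(leL_mull Dt); rewrite gmulKVl.
by move=> c ca cb; apply/(leL_mull Dt); rewrite gmulKVl; apply: m_max; exact/leL_mull.
Qed.

Lemma finite_meet (z : nat -> G) (K : nat) : (0 < K)%N -> exists m,
  (forall i, (i < K)%N -> leL m (z i)) /\
  (forall c, (forall i, (i < K)%N -> leL c (z i)) -> leL c m).
Proof.
case: K => // K _; elim: K => [|K [m [m_low m_max]]].
  by exists (z 0%N); split=> [[|//] _|c /(_ 0%N isT)]; first exact: leL_refl.
have [m' [m'm m'z m'_max]] := meet_exists m (z K.+1).
exists m'; split.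
  move=> i; rewrite ltnS leq_eqVlt => /orP [/eqP ->|lt_iK] //.
  exact: leL_trans m'm (m_low i lt_iK).
by move=> c c_low; apply: m'_max; [apply: m_max => i lt_i; apply/c_low/ltnW | apply: c_low].
Qed.

Hypothesis Delta_nontrivial : Δ <> one.

Lemma Pos_Delta_bound p : P p -> exists B, forall u : nat, leL (gpown Δ u) p -> (u <= B)%N.
Proof.
move=> Pp; have [B HB] := Pos_atomic Pp; exists B => u Delta_u_p.
set c := inv (gpown Δ u) ⋅ p in Delta_u_p.
pose s := nseq u Δ ++ (if excluded_middle_informative (c = one) then [::] else [:: c]).
apply: leq_trans (HB s _ _); first by rewrite size_cat size_nseq leq_addr.
  move=> x /List.in_app_iff [|].
    by elim: (u) => [|v IH] //= [<-|/IH //]; split; [exact: PosDelta | exact: Delta_nontrivial].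
  by case: excluded_middle_informative => //= c_neq1 [<-|].
rewrite -gprod_cat gprod_nseq -[RHS](gmulKVl (gpown Δ u) p) -/c; congr (_ ⋅ _).
by case: excluded_middle_informative => /= [->|_]; rewrite ?gmul1r.
Qed.

(* inf is well defined: the exponents r with Δ^r <= y are bounded below by
   a shift to a positive element, and above by Pos_Delta_bound. *)
Lemma inf_exists (y : G) : exists r, is_inf y r.
Proof.
have [k Pk] := Dpow_shift_pos y; have [B HB] := Pos_Delta_bound Pk.
have Dk : gpown D k = gpow Δ (N * k)%N%:Z by rewrite -[RHS]/(gpown Δ (N * k)) gpownM.
have lower : leL (gpow Δ (- (N * k)%N%:Z)) y by rewrite /leL -gpowN opprK -Dk.
have upper s : leL (gpow Δ s) y -> s <= B%:Z.
  move=> Delta_s.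
  have : leL (gpow Δ ((N * k)%N%:Z + s)) (gpown D k ⋅ y) by rewrite Dk gpowD; apply/leL_mull.
  case: (lerP 0 ((N * k)%N%:Z + s)) => [le0|lt0 _]; last by lia.
  by rewrite -(gez0_abs le0) => /HB; rewrite -lez_nat gez0_abs //; lia.
have [r r_le r_max] := int_max_exists lower upper.
by exists r.
Qed.

Lemma infG_spec (y : G) : is_inf y (infG y).
Proof. by rewrite /infG; apply: epsilon_spec; exact: inf_exists. Qed.

Lemma infG_eq (y : G) r : is_inf y r -> infG y = r.
Proof.
case=> Delta_r r_max; have [Delta_inf inf_max] := infG_spec y.
by apply/eqP; rewrite eq_le r_max // inf_max.
Qed.

Lemma infG_Dpow (a : int) (y : G) : infG (gpow D a ⋅ y) = N%:Z * a + infG y.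
Proof.
have [Delta_inf inf_max] := infG_spec y.
apply: infG_eq; split; first by rewrite gpow_D gpowD; apply/leL_mull.
move=> s Delta_s; have : leL (gpow Δ (s - N%:Z * a)) y.
  by apply/(leL_mull (gpow Δ (N%:Z * a))); rewrite -gpowD addrC subrK -gpow_D.
by move/inf_max; rewrite lerBlDl.
Qed.

(* If x^K = D^T with K > 0, then inf(x^n) stays within bounded distance of
   nNT/K: write n = mK + r, so x^n = D^(mT) x^r. Hence INF(x) = NT/K. *)
Lemma INF_of_power (x : G) (K : nat) (T : int) :
  (0 < K)%N -> gpown x K = gpow D T -> INF x * K%:R = (N%:Z * T)%:~R.
Proof.
move=> K_gt0 xK; pose q : rat := (N%:Z * T)%:~R / K%:R.
have K_neq0 : K%:R != 0 :> rat by rewrite pnatr_eq0 -lt0n.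
suff -> : INF x = q by rewrite divfK.
have Kq : K%:R * q = (N%:Z * T)%:~R by rewrite mulrC divfK.
pose dev (r : 'I_K) := `|(infG (gpown x r))%:~R - r%:R * q|.
apply: (INF_bounded (C := \sum_(r < K) dev r)) => n n_gt0.
have r_lt : (n %% K < K)%N by rewrite ltn_pmod.
set m := (n %/ K)%N; set r := (n %% K)%N.
have n_mr : n = (m * K + r)%N by rewrite /m /r -divn_eq.
have x_n : gpown x n = gpow D (T * m%:Z) ⋅ gpown x r.
  by rewrite {1}n_mr gpownD mulnC gpownM xK gpowMn.
have -> : (infG (gpown x n))%:~R - n%:R * q = (infG (gpown x r))%:~R - r%:R * q.
  rewrite x_n infG_Dpow mulrA n_mr intrD intrM natrD natrM mulrDl -mulrA Kq.
  by rewrite [m%:R * _]mulrC [_%:~R * _ + _]addrC addrKA.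
rewrite (bigD1 (Ordinal r_lt)) //= lerDl.
by apply: sumr_ge0 => i _; exact: normr_ge0.
Qed.

Section BoundedExponent.
Variable divs : seq G.
Hypothesis divsP : forall a, P a -> leL a D -> List.In a divs.
Variables (x : G) (K : nat) (L : int).
Hypotheses (K_gt0 : (0 < K)%N) (xK : gpown x K = gpow D L).

(* fl j = floor(jL/K) is the D-exponent closest below x^j, and
   xnorm j = D^(-fl j) x^j is the normalised j-th power of x *)
Definition fl (j : nat) : int := ((j%:Z * L) %/ K%:Z)%Z.
Definition xnorm (j : nat) : G := gpow D (- fl j) ⋅ gpown x j.

Lemma fl_addK j : fl (j + K) = fl j + L.
Proof.
have K_neq0 : K%:Z != 0 by rewrite eqz_nat -lt0n.
by rewrite /fl PoszD mulrDl addrC [K%:Z * L]mulrC divzMDl // addrC.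
Qed.

Lemma fl_add j k : fl j + fl k <= fl (j + k) <= fl j + fl k + 1.
Proof. by rewrite /fl PoszD mulrDl; apply: divz_add_bounds; rewrite ltz_nat. Qed.

Lemma xnorm_addKm k c : xnorm (k + K * c) = xnorm k.
Proof.
have xnorm_addK j : xnorm (j + K) = xnorm j.
  rewrite /xnorm fl_addK gpownD xK -(Dpow_commute L) gmulA -gpowD.
  by rewrite opprD subrK.
elim: c => [|c IH]; first by rewrite muln0 addn0.
by rewrite mulnS addnCA addnC xnorm_addK.
Qed.

Lemma xnorm_mod n : xnorm n = xnorm (n %% K).
Proof. by rewrite {1}(divn_eq n K) mulnC addnC xnorm_addKm. Qed.

Lemma x_xnorm j k : gpown x j ⋅ xnorm k = gpow D (fl (j + k) - fl k) ⋅ xnorm (j + k).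
Proof.
rewrite /xnorm gmulA -(Dpow_commute (- fl k)) -gmulA -gpownD gmulA -gpowD.
by rewrite addrAC subrr add0r.
Qed.

Lemma xnorm_meet_exists : exists m, (forall n, leL m (xnorm n)) /\
  (forall c, (forall n, leL c (xnorm n)) -> leL c m).
Proof.
have [m [m_low m_max]] := finite_meet xnorm K_gt0.
exists m; split; first by move=> n; rewrite xnorm_mod; apply: m_low; rewrite ltn_pmod.
by move=> c c_low; apply: m_max => i _; exact: c_low.
Qed.

Section Meet.
Variable m : G.
Hypotheses (m_low : forall n, leL m (xnorm n))
  (m_max : forall c, (forall n, leL c (xnorm n)) -> leL c m).

(* D^(fl j) m <= x^j m, because D^(fl j) m <= x^j xnorm k for every k *)
Lemma meet_lower j : leL (gpow D (fl j) ⋅ m) (gpown x j ⋅ m).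
Proof.
apply/(leL_mull (inv (gpown x j))); rewrite gmulKl; apply: m_max => k.
apply/(leL_mull (gpown x j)); rewrite gmulKVl x_xnorm.
apply: leL_trans (_ : leL _ (gpow D (fl j) ⋅ xnorm (j + k))) _; first exact/leL_mull.
by apply: leL_Dpow; have /andP [le_fl _] := fl_add j k; rewrite lerBrDr.
Qed.

(* x^j m <= D^(fl j + 1) m, because D^(-fl j - 1) x^j m <= xnorm k for
   every k (write xnorm k = xnorm (k + K j) and split off x^j) *)
Lemma meet_upper j : leL (gpown x j ⋅ m) (gpow D (fl j + 1) ⋅ m).
Proof.
apply/(leL_mull (gpow D (- (fl j + 1)))).
rewrite [gpow D _ ⋅ (gpow D _ ⋅ m)]gmulA -gpowD addNr gmul1l.
apply: m_max => k; set n := (k + K.-1 * j)%N.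
have jn : (j + n = k + K * j)%N by rewrite /n -[in RHS](prednK K_gt0) mulSn addnCA.
apply: leL_trans (_ : leL _ (gpow D (- (fl j + 1)) ⋅ (gpown x j ⋅ xnorm n))) _.
  by apply/leL_mull/leL_mull.
rewrite x_xnorm jn xnorm_addKm gmulA -gpowD.
rewrite -{2}(gmul1l (xnorm k)) -[gone G]/(gpow D 0); apply: leL_Dpow; rewrite -jn.
by have /andP [_ le_fl] := fl_add j n; lia.
Qed.

Lemma conj_xnorm_interval j (y := inv m ⋅ x ⋅ m) :
  P (gpow D (- fl j) ⋅ gpown y j) /\ leL (gpow D (- fl j) ⋅ gpown y j) D.
Proof.
have y_j : gpow D (- fl j) ⋅ gpown y j = inv (gpow D (fl j) ⋅ m) ⋅ (gpown x j ⋅ m).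
  by rewrite /y gpown_conj ginvM -gpowN -(Dpow_commute _ (inv m)) !gmulA.
split; first by rewrite y_j; exact: meet_lower.
have Dfl : gpow D (fl j) ⋅ m ⋅ D = gpow D (fl j + 1) ⋅ m.
  by rewrite gpowD -[gpow D 1]/(gpown D 1) gpown1 -gmulA -D_central gmulA.
by rewrite /leL y_j ginvM ginvK -gmulA Dfl; exact: meet_upper.
Qed.

End Meet.

(* Pigeonhole on the normalised powers of m^-1 x m, which lie in [1, D]. *)
Lemma power_Dpow_bounded :
  exists e t, [/\ (0 < e)%N, (e <= size divs)%N & gpown x e = gpow D t].
Proof.
have [m [m_low m_max]] := xnorm_meet_exists.
set y := inv m ⋅ x ⋅ m.
pose w j := gpow D (- fl j) ⋅ gpown y j.
have w_in j : (j <= size divs)%N -> List.In (w j) divs.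
  by move=> _; have [Pw wD] := conj_xnorm_interval m_low m_max j; exact: divsP.
have [i [j [lt_ij le_j wij]]] := pigeonhole w_in.
have y_ji : gpown y (j - i) = gpow D (fl j - fl i).
  apply: (@gmulIl _ (gpown y i)); rewrite -gpownD subnKC; last exact: ltnW.
  apply: (@gmulIl _ (gpow D (- fl j))); rewrite -[_ ⋅ gpown y j]/(w j) -wij /w.
  by rewrite -Dpow_commute !gmulA -gpowD addrA addNr add0r.
exists (j - i)%N, (fl j - fl i); split; first by rewrite subn_gt0.
  exact: leq_trans (leq_subr _ _) le_j.
have x_y n : gpown x n = m ⋅ gpown y n ⋅ inv m.
  by rewrite gpown_conj !gmulA gmulVr gmul1l gmulKr.
by rewrite x_y y_ji -Dpow_commute gmulKr.
Qed.

End BoundedExponent.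

Section PeriodicSubgroup.
Variable divs : seq G.
Hypothesis divsP : forall a, P a -> leL a D -> List.In a divs.
Variable H : G -> Prop.
Hypotheses (H1 : H one) (HM : forall x y, H x -> H y -> H (x ⋅ y))
  (HV : forall x, H x -> H (inv x)) (Habel : forall x y, H x -> H y -> x ⋅ y = y ⋅ x)
  (Hper : forall x, H x -> periodic x).

Lemma INF_periodic x : H x -> exists K T, [/\ (0 < K)%N, gpown x K = gpow D T,
  INF x * K%:R = (N%:Z * T)%:~R & (x <> one -> T <> 0)].
Proof.
move=> Hx; have [K [T [K_gt0 xK T_neq0]]] := periodic_power (Hper Hx).
by exists K, T; split=> //; exact: INF_of_power.
Qed.

(* INF is additive on H: if x^Kx = D^Tx and y^Ky = D^Ty then, since x and y
   commute, (xy)^(Kx Ky) = D^(Tx Ky + Ty Kx). *)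
Lemma INF_additive x y : H x -> H y -> INF (x ⋅ y) = INF x + INF y.
Proof.
move=> Hx Hy.
have [Kx [Tx [Kx_gt0 xK INF_x _]]] := INF_periodic Hx.
have [Ky [Ty [Ky_gt0 yK INF_y _]]] := INF_periodic Hy.
have xyK : gpown (x ⋅ y) (Kx * Ky) = gpow D (Tx * Ky%:Z + Ty * Kx%:Z).
  rewrite gpownMc; last exact: Habel.
  by rewrite gpownM xK mulnC gpownM yK -!gpowMn -gpowD.
have K_gt0 : (0 < Kx * Ky)%N by rewrite muln_gt0 Kx_gt0.
have K_neq0 : (Kx * Ky)%:R != 0 :> rat by rewrite pnatr_eq0 -lt0n.
apply: (mulIf K_neq0); rewrite (INF_of_power K_gt0 xyK) mulrDl natrM.
rewrite mulrA INF_x [Kx%:R * _]mulrC mulrA INF_y.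
by rewrite mulrDr intrD !intrM !mulrA.
Qed.

(* INF is injective on H: for z = x y^-1, INF(z) K = N T vanishes only if
   T = 0, which forces z = 1. *)
Lemma INF_injective x y : H x -> H y -> INF x = INF y -> x = y.
Proof.
move=> Hx Hy INF_xy; have Hz : H (x ⋅ inv y) by apply: HM => //; exact: HV.
have INF_z : INF (x ⋅ inv y) = 0.
  by rewrite INF_additive ?(homV H1 HV INF_additive Hy) ?INF_xy ?subrr //; exact: HV.
case: (classic (x ⋅ inv y = one)) => [z1|z_neq1].
  by apply: (@gmulIr _ (inv y)); rewrite z1 gmulVr.
have [K [T [_ _ INF_zK /(_ z_neq1) T_neq0]]] := INF_periodic Hz.
move: INF_zK; rewrite INF_z mul0r => /esym/eqP; rewrite intr_eq0 mulf_eq0 eqz_nat.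
by rewrite (negPf (lt0n_neq0 N_gt0)) => /eqP.
Qed.

Lemma INF_integral x : H x -> exists z : int, INF x * ((size divs)`!)%:R = z%:~R.
Proof.
move=> Hx; have [K [T [K_gt0 xK _]]] := periodic_power (Hper Hx).
have [e [t [e_gt0 e_le xe]]] := power_Dpow_bounded divsP K_gt0 xK.
have [c ->] : exists c, (size divs)`! = (e * c)%N.
  have /dvdnP [c ->] := dvdn_fact (n := size divs) (m := e) (introT andP (conj e_gt0 e_le)).
  by exists c; rewrite mulnC.
exists (N%:Z * t * c%:Z).
by rewrite natrM mulrA (INF_of_power e_gt0 xe) [RHS]intrM.
Qed.

Lemma abelian_periodic_subgroup :
  (forall x y, H x -> H y -> INF (x ⋅ y) = INF x + INF y) /\
  (forall x y, H x -> H y -> INF x = INF y -> x = y) /\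
  (exists c, H c /\ forall x, H x -> exists k : int, x = gpow c k).
Proof.
split; first exact: INF_additive.
split; first exact: INF_injective.
pose Q : rat := ((size divs)`!)%:R.
have Q_neq0 : Q != 0 by rewrite pnatr_eq0 -lt0n fact_gt0.
apply: (@cyclic_of_integral_hom _ _ H1 HM HV (fun x => INF x * Q)).
- by move=> x y Hx Hy; rewrite INF_additive // mulrDl.
- by move=> x y Hx Hy /(mulIf Q_neq0); exact: INF_injective.
- exact: INF_integral.
Qed.

End PeriodicSubgroup.
End CentralPower.

Lemma INF_trivial (G : GarsideGroup) : (forall g : G, g = gone G) -> forall x : G, INF x = 0.
Proof.
move=> triv x; apply: (INF_bounded (C := `|(infG (gone G))%:~R|)) => n _.
by rewrite (triv (gpown x n)) mulr0 subr0.
Qed.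

Theorem mainTheorem8 (G : GarsideGroup) (H : G -> Prop)
  (H1 : H (gone G))
  (HM : forall x y, H x -> H y -> H (gmul x y))
  (HV : forall x, H x -> H (ginv x))
  (Habel : forall x y, H x -> H y -> gmul x y = gmul y x)
  (Hper : forall x, H x -> periodic x) :
  (forall x y, H x -> H y -> INF (gmul x y) = (INF x + INF y)%R) /\
  (forall x y, H x -> H y -> INF x = INF y -> x = y) /\
  (exists c, H c /\ forall x, H x -> exists k : int, x = gpow c k).
Proof.
case: (classic (exists g : G, g <> gone G)) => [nontrivial|trivial].
  have [N N_gt0 D_central] := Delta_power_central G.
  have [divs divsP] := Pos_interval_finite (Pos_gpown N (PosDelta G)).
  exact: (abelian_periodic_subgroup N_gt0 D_central (Delta_neq1 nontrivial) divsP).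
have triv (g : G) : g = gone G by apply: NNPP => g_neq1; apply: trivial; exists g.
split; first by move=> x y _ _; rewrite !INF_trivial // addr0.
split; first by move=> x y _ _ _; rewrite (triv x) (triv y).
by exists (gone G); split=> // x _; exists 0; rewrite (triv x).
Qed.
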